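(* Consider the multiple-concurrent-proposer auction game described in the context with $m\ge 2$ proposers and $n=1$ honest bidder (so $N=\{0,1\}$), with bidder $i$'s value drawn from a distribution with CDF $F_i$ and density $f_i$. This game has an equilibrium in which the outcome of the auction is the same as in a standard second-price auction (with the same reserve) with no censorship step, and in which the expected tip paid by each bidder to each proposer is $0$. In particular, in this equilibrium: (i) bidder 1 bids truthfully and uses the conditional tip $t_1(v_1)=0$, $T_1(v_1)=1$ for every value $v_1$; (ii) bidder 0, given his value $v_0$ and the observed conditional tip $(t,T)$, offers each proposer the payment $z_0(t,T,v_0)=0$ if $C(v_0)<mT$ and $z_0(t,T,v_0)=T$ if $C(v_0)\ge mT$, in exchange for excluding bidder 1's bid, where $C(v_0)$ is bidder 0's net value to censoring bidder 1's bid, i.e. the difference between his profit $v_0$ from censoring the competing bid and winning the auction for free and his expected surplus from competing with bidder 1 in the auction; (iii) each proposer, given an offered payment $z$ and conditional tip $(t,T)$, excludes (censors) bidder 1's bid with probability $$p(z,t,T)=\begin{cases}0 & z<t,\\ \left(\frac{z-t}{T-t}\right)^{\frac{1}{m-1}} & t\le z<T,\\ 1 & z\ge T.\end{cases}$$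
   Context: Multiple-concurrent-proposer auction game. A seller has one indivisible good; there are $n+1$ buyers $N=\{0,1,\dots,n\}$ with quasilinear utilities and independent private values in $[0,1]$, common knowledge of distributions. The seller announces a sealed-bid second-price auction with reserve $r$ to be conducted within a single slot in which $m$ proposers concurrently and independently each build a block; a bid enters the auction iff at least one proposer includes it. Timing: buyers learn values; buyers $1,\dots,n$ simultaneously submit a private bid $b_i$ and a public conditional (''twin'') tip $(t_i,T_i)$, meaning: if exactly one proposer includes the bid, that proposer receives $T_i$; if more than one proposer includes it, each including proposer receives $t_i$; if none includes it, nothing is paid. Buyer 0 observes all conditional tips and simultaneously offers each proposer a take-it-or-leave-it offer of a subset $S\subseteq\{1,\dots,n\}$ and a payment to exclude those bids (paid to a proposer iff he excludes them), and submits his own bid $b_0$. Each proposer simultaneously accepts or rejects (possibly randomizing), constructing his block to contain $N\setminus S$ or $N$. The second-price auction is computed on the union of included bids (highest included bid wins if at least $r$, paying the maximum of $r$ and other included bids), and tips are paid according to inclusion behavior. Attention is restricted to equilibria (perfect Bayesian) in which bidders $1,\dots,n$ bid truthfully and bidder 0 bids his value if he assigns positive probability to winning. *)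

From mathcomp Require Import all_boot all_order all_algebra.
From mathcomp Require Import all_classical all_reals all_analysis.
Set Implicit Arguments. Unset Strict Implicit. Unset Printing Implicit Defensive.
Import Order.TTheory GRing.Theory Num.Theory.
Import numFieldNormedType.Exports.
Local Open Scope classical_set_scope.
Local Open Scope ring_scope.

Section Game.
Variable R : realType.

(* A value distribution on [0,1] given by a density f (CDF F(x) = int_0^x f). *)
Definition is_value_density (f : R -> R) : Prop :=
  measurable_fun setT f /\ (forall x, 0 <= f x) /\
  (\int[lebesgue_measure]_(x in `[0%R, 1%R]) (f x)%:E = 1)%E.

Definition Ex (f : R -> R) (g : R -> R) : R :=
  \int[lebesgue_measure]_(x in `[0%R, 1%R]) (g x * f x).

(* Second-price auction with reserve r, ties broken in favour of bidder 0. *)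
Definition u0_alone (r v0 b0 : R) : R := if r <= b0 then v0 - r else 0.
Definition u0_both (r v0 b0 b1 : R) : R :=
  if (b1 <= b0) && (r <= b0) then v0 - Num.max r b1 else 0.
Definition u1_both (r v1 b1 b0 : R) : R :=
  if (b0 < b1) && (r <= b1) then v1 - Num.max r b0 else 0.

Definition pexcl (m : nat) (z t T : R) : R :=
  if z < t then 0
  else if z < T then ((z - t) / (T - t)) `^ ((m.-1)%:R)^-1
  else 1.

(* C(v0): bidder 0's net value to censoring bidder 1's bid: payoff from being
   alone in the auction minus expected surplus competing with bidder 1
   (who bids truthfully; belief about v1 is the prior). *)
Definition censor_value (r : R) (f1 : R -> R) (v0 : R) : R :=
  u0_alone r v0 v0 - Ex f1 (fun v1 => u0_both r v0 v0 v1).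

Definition z0 (m : nat) (r : R) (f1 : R -> R) (t T v0 : R) : R :=
  if censor_value r f1 v0 < m%:R * T then 0 else T.

Definition t1 (v1 : R) : R := 0.
Definition T1 (v1 : R) : R := 1.

(* expected tip received by one proposer from bidder 1 when every proposer
   independently excludes with probability p *)
Definition exp_tip (m : nat) (p t T : R) : R :=
  (1 - p) * (p ^+ m.-1 * T + (1 - p ^+ m.-1) * t).

(* Interim expected utility of bidder 0 (value v0, observed tip (t,T)) who bids
   b0 and offers zs j to proposer j for excluding bidder 1's bid; proposers
   follow (iii), bidder 1 bids truthfully, v1 distributed with density f1. *)
Definition U0 (m : nat) (r : R) (f1 : R -> R) (t T v0 b0 : R)
    (zs : 'I_m -> R) : R :=
  let cens := \prod_(j < m) pexcl m (zs j) t T in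
  cens * u0_alone r v0 b0 + (1 - cens) * Ex f1 (fun v1 => u0_both r v0 b0 v1)
  - \sum_(j < m) zs j * pexcl m (zs j) t T.

Arguments U0 m r f1 t T v0 b0 zs : clear implicits.

(* Interim expected utility of bidder 1 (value v1) bidding b with twin tip
   (t,T); bidder 0 follows (ii) and bids v0, proposers follow (iii). *)
Definition U1 (m : nat) (r : R) (f0 f1 : R -> R) (v1 b t T : R) : R :=
  Ex f0 (fun v0 =>
    let p := pexcl m (z0 m r f1 t T v0) t T in
    (1 - p ^+ m) * u1_both r v1 b v0 - m%:R * exp_tip m p t T).

(* A proposer excluding with probability q, facing offer z and tip (t,T),
   believing each of the other m-1 proposers received the same offer and
   excludes with probability po. *)
Definition proposer_payoff (m : nat) (q z t T po : R) : R :=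
  q * z + (1 - q) * (po ^+ m.-1 * T + (1 - po ^+ m.-1) * t).

Definition profile_is_equilibrium (m : nat) (r : R) (f0 f1 : R -> R) : Prop :=
  (forall v1 : R, 0 <= v1 <= 1 -> forall b t T : R, 0 <= t -> t <= T ->
     U1 m r f0 f1 v1 b t T <= U1 m r f0 f1 v1 v1 (t1 v1) (T1 v1)) /\
  (forall v0 : R, 0 <= v0 <= 1 -> forall t T : R, 0 <= t -> t <= T ->
   forall (b0 : R) (zs : 'I_m -> R), (forall j, 0 <= zs j) ->
     U0 m r f1 t T v0 b0 zs <= U0 m r f1 t T v0 v0 (fun=> z0 m r f1 t T v0)) /\
  (forall t T z : R, 0 <= t -> t <= T -> 0 <= z ->
     0 <= pexcl m z t T <= 1 /\
     forall q : R, 0 <= q <= 1 ->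
       proposer_payoff m q z t T (pexcl m z t T)
       <= proposer_payoff m (pexcl m z t T) z t T (pexcl m z t T)).

End Game.

From mathcomp Require Import all_boot all_order all_algebra.
From mathcomp Require Import all_classical all_reals all_analysis.
From mathcomp Require Import ring lra.
Set Implicit Arguments. Unset Strict Implicit.
Import Order.TTheory GRing.Theory Num.Theory.
Local Open Scope ring_scope.

(* Proposers mix so as to be indifferent: on [t <= z < T], [p ^+ (m - 1)] equals
   [(z - t) / (T - t)], and including then yields exactly [z] in expected tip.
   Consequently an exclusion probability [p_j] bought from proposer [j] costs
   bidder 0 at least [T p_j ^+ m], and by AM-GM a censorship probability
   [P = prod_j p_j] costs at least [m T P].  His payoff is thus at most
   [B + P (C(v0) - m T)], affine in [P], and the offer [z0] attains the better
   of [P = 0] and [P = 1].  Against bidder 1's tip [(0, 1)] we have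
   [C(v0) <= 1 < m T], so nothing is offered, nothing is censored and no tip is
   paid; any other tip only exposes bidder 1 to censorship and to nonnegative
   expected tips, while truthful bidding is dominant in a second-price
   auction. *)

Section NonnegIntegral.
Context d (T : measurableType d) (R : realType).
Variable mu : {measure set T -> \bar R}.
Local Open Scope ereal_scope.

(* No measurability is needed: a nonnegative integral is a supremum over
   simple minorants. *)
Lemma ge0_le_integral_nomeas (D : set T) (f g : T -> \bar R) :
  (forall x, D x -> 0 <= f x) -> (forall x, D x -> f x <= g x) ->
  \int[mu]_(x in D) f x <= \int[mu]_(x in D) g x.
Proof.
move=> f0 fg.
have g0 x : D x -> 0 <= g x by move=> Dx; exact: le_trans (f0 x Dx) (fg x Dx).
rewrite [leLHS]ge0_integralE// [leRHS]ge0_integralE//.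
apply: ereal_sup_le => _ [h hf <-]; exists h => //= x.
apply: le_trans (hf x) _; rewrite /patch; case: ifP => // /set_mem; exact: fg.
Qed.

End NonnegIntegral.

Section Expectation.
Variables (R : realType) (f : R -> R).
Hypothesis f_density : is_value_density f.

Lemma eq_Ex (g h : R -> R) :
  (forall x, 0 <= x <= 1 -> g x = h x) -> Ex f g = Ex f h.
Proof.
move=> gh; rewrite /Ex; congr fine; apply: eq_integral => x.
by rewrite inE /= in_itv => /gh ->.
Qed.

Lemma Ex_ge0 (g : R -> R) : (forall x, 0 <= x <= 1 -> 0 <= g x) -> 0 <= Ex f g.
Proof.
case: f_density => _ [f0 _] g0; apply/fine_ge0/integral_ge0 => x.
by rewrite /= in_itv => /g0 gx; rewrite lee_fin mulr_ge0.
Qed.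

(* [g] may fail to be integrable, in which case [Ex f g] is a junk value;
   the bound [h <= 1] keeps the positive part of [g f] finite. *)
Lemma le_Ex (g h : R -> R) :
  (forall x, 0 <= x <= 1 -> g x <= h x) ->
  (forall x, 0 <= x <= 1 -> 0 <= h x <= 1) -> Ex f g <= Ex f h.
Proof.
case: f_density => _ [f0 f1] gh h01.
have in01 x : `[(0 : R), 1]%classic x -> 0 <= x <= 1 by rewrite /= in_itv.
rewrite /Ex /Rintegral integralE.
set a := (X in _ <= fine X).
set P := (\int[_]_(x in _) _)%E; set N := (\int[_]_(x in _) _)%E.
have a0 : (0 <= a)%E.
  by apply: integral_ge0 => x /in01 /h01 /andP[h0 _]; rewrite lee_fin mulr_ge0.
have a1 : (a <= 1)%E.
  rewrite -f1; apply: ge0_le_integral_nomeas => x /in01 /h01 /andP[h0 h1].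
    by rewrite lee_fin mulr_ge0.
  by rewrite lee_fin ler_piMl.
have P0 : (0 <= P)%E by apply: integral_ge0 => x _; exact: funepos_ge0.
have N0 : (0 <= N)%E by apply: integral_ge0 => x _; exact: funeneg_ge0.
have Pa : (P <= a)%E.
  apply: ge0_le_integral_nomeas => [x _|x /in01 x01]; first exact: funepos_ge0.
  have /andP[h0 _] := h01 x x01.
  by rewrite funeposE ge_max !lee_fin mulr_ge0 // ler_wpM2r // gh.
move: a0 a1 P0 Pa N0.
by case: a => [a| |] //; case: P => [p| |] //; case: N => [n| |] //=;
  rewrite !lee_fin => *; lra.
Qed.

End Expectation.

Section SecondPrice.
Variables (R : realType) (r : R).

Lemma u0_alone_le_truthful (v0 b0 : R) : u0_alone r v0 b0 <= u0_alone r v0 v0.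
Proof.
by rewrite /u0_alone; case: (leP r b0); case: (leP r v0) => *; lra.
Qed.

Lemma u0_both_le_truthful (v0 b0 v1 : R) :
  u0_both r v0 b0 v1 <= u0_both r v0 v0 v1.
Proof.
rewrite /u0_both.
by case: (leP v1 b0); case: (leP r b0); case: (leP v1 v0); case: (leP r v0);
  case: (leP r v1) => /= *; lra.
Qed.

Lemma u1_both_le_truthful (v1 b1 b0 : R) :
  u1_both r v1 b1 b0 <= u1_both r v1 v1 b0.
Proof.
rewrite /u1_both.
by case: (ltP b0 b1); case: (leP r b1); case: (ltP b0 v1); case: (leP r v1);
  case: (leP r b0) => /= *; lra.
Qed.

Lemma u0_alone_truthful_le1 (v0 : R) :
  0 <= r -> v0 <= 1 -> u0_alone r v0 v0 <= 1.
Proof.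
by move=> r0 v01; rewrite /u0_alone; case: ifP => _; [lra | exact: ler01].
Qed.

Lemma u0_both_truthful_in01 (v0 v1 : R) :
  0 <= r -> v0 <= 1 -> 0 <= u0_both r v0 v0 v1 <= 1.
Proof.
move=> r0 v01; rewrite /u0_both; case: ifP => [/andP[v10 rv0]|_]; last first.
  by rewrite lexx ler01.
by case: (leP r v1) => ?; apply/andP; split; lra.
Qed.

Lemma u1_both_truthful_in01 (v1 b0 : R) :
  0 <= r -> v1 <= 1 -> 0 <= u1_both r v1 v1 b0 <= 1.
Proof.
move=> r0 v11; rewrite /u1_both; case: ifP => [/andP[b0v1 rv1]|_]; last first.
  by rewrite lexx ler01.
by case: (leP r b0) => ?; apply/andP; split; lra.
Qed.

End SecondPrice.

Lemma powR_invn_expr (R : realType) (a : R) (n : nat) :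
  0 <= a -> (0 < n)%N -> (a `^ n%:R^-1) ^+ n = a.
Proof.
move=> a0 n0; rewrite -powR_mulrn ?powR_ge0 // -powRrM mulVf ?powRr1 //.
by rewrite pnatr_eq0 -lt0n.
Qed.

Section Proposers.
Variables (R : realType) (m : nat).
Hypothesis m_gt1 : (1 < m)%N.

Let m1_gt0 : (0 < m.-1)%N. Proof. by rewrite ltn_predRL. Qed.

Definition incl_tip (po t T : R) : R := po ^+ m.-1 * T + (1 - po ^+ m.-1) * t.

Lemma exp_tipE (p t T : R) : exp_tip m p t T = (1 - p) * incl_tip p t T.
Proof. by []. Qed.

Lemma proposer_payoffE (q z t T po : R) :
  proposer_payoff m q z t T po = q * z + (1 - q) * incl_tip po t T.
Proof. by []. Qed.

Lemma incl_tip0 (t T : R) : incl_tip 0 t T = t.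
Proof. by rewrite /incl_tip expr0n eqn0Ngt m1_gt0 mul0r subr0 mul1r add0r. Qed.

Lemma incl_tip1 (t T : R) : incl_tip 1 t T = T.
Proof. by rewrite /incl_tip expr1n subrr mul0r mul1r addr0. Qed.

Lemma incl_tip_ge0 (po t T : R) :
  0 <= po <= 1 -> 0 <= t -> 0 <= T -> 0 <= incl_tip po t T.
Proof.
move=> /andP[po0 po1] t0 T0; rewrite /incl_tip.
by rewrite addr_ge0 ?mulr_ge0 ?exprn_ge0 ?subr_ge0 ?exprn_ile1.
Qed.

Lemma exp_tip_ge0 (p t T : R) :
  0 <= p <= 1 -> 0 <= t -> 0 <= T -> 0 <= exp_tip m p t T.
Proof.
move=> p01 t0 T0; rewrite exp_tipE mulr_ge0 ?incl_tip_ge0 // subr_ge0.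
by case/andP: p01.
Qed.

Lemma pexcl_lt (z t T : R) : z < t -> pexcl m z t T = 0.
Proof. by rewrite /pexcl => ->. Qed.

Lemma pexcl_ge (z t T : R) : t <= z -> T <= z -> pexcl m z t T = 1.
Proof. by rewrite /pexcl !ltNge => -> ->. Qed.

Lemma pexcl_expr (z t T : R) :
  t <= z -> z < T -> pexcl m z t T ^+ m.-1 = (z - t) / (T - t).
Proof.
move=> tz zT; rewrite /pexcl ltNge tz /= zT powR_invn_expr //.
by rewrite divr_ge0 ?subr_ge0 // ltW // (le_lt_trans tz).
Qed.

Lemma pexcl_ge0 (z t T : R) : 0 <= pexcl m z t T.
Proof.
by rewrite /pexcl; case: ifP => _; last case: ifP => _;
  rewrite ?lexx ?ler01 ?powR_ge0.
Qed.

Lemma pexcl_le1 (z t T : R) : pexcl m z t T <= 1.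
Proof.
have [zt|tz] := ltP z t; first by rewrite pexcl_lt ?ler01.
have [zT|Tz] := ltP z T; last by rewrite pexcl_ge.
rewrite -(ler_pXn2r m1_gt0) ?nnegrE ?pexcl_ge0 // expr1n.
rewrite pexcl_expr // ler_pdivrMr ?mul1r ?lerD2r ?ltW //.
by rewrite subr_gt0 (le_lt_trans tz).
Qed.

Lemma pexcl0 (t T : R) : 0 <= t -> 0 < T -> pexcl m 0 t T = 0.
Proof.
move=> t0 T0; have [t_gt0|t_le0] := ltP 0 t; first exact: pexcl_lt.
have -> : t = 0 by apply/le_anti/andP.
by rewrite /pexcl ltxx T0 subrr mul0r powR0 // invr_eq0 pnatr_eq0 -lt0n.
Qed.

Lemma incl_tip_pexcl (z t T : R) :
  t <= z -> z < T -> incl_tip (pexcl m z t T) t T = z.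
Proof.
move=> tz zT; have Tt : T - t != 0.
  by rewrite subr_eq0 gt_eqF // (le_lt_trans tz).
by rewrite /incl_tip pexcl_expr //; field.
Qed.

Lemma pexcl_best_response (z t T q : R) : t <= T -> 0 <= q <= 1 ->
  proposer_payoff m q z t T (pexcl m z t T)
  <= proposer_payoff m (pexcl m z t T) z t T (pexcl m z t T).
Proof.
move=> tT /andP[q0 q1]; rewrite !proposer_payoffE.
have [zt|tz] := ltP z t; first by rewrite pexcl_lt // incl_tip0; nra.
have [zT|Tz] := ltP z T; last by rewrite pexcl_ge // incl_tip1; nra.
by rewrite incl_tip_pexcl //; lra.
Qed.

Lemma pexcl_payment (z t T : R) : 0 <= t ->
  T * pexcl m z t T ^+ m <= z * pexcl m z t T.
Proof.
move=> t0; have [zt|tz] := ltP z t.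
  by rewrite pexcl_lt // expr0n gtn_eqF ?(ltnW m_gt1) // !mulr0.
have [zT|Tz] := ltP z T; last by rewrite pexcl_ge // expr1n !mulr1.
rewrite -(prednK (ltnW m_gt1)) exprSr pexcl_expr //.
rewrite mulrA ler_wpM2r ?pexcl_ge0 //.
have Tt : 0 < T - t by rewrite subr_gt0 (le_lt_trans tz).
by rewrite mulrA ler_pdivrMr //; nra.
Qed.

End Proposers.

Lemma AGM_prod_sum_expn (R : numDomainType) (n : nat) (q : 'I_n -> R) :
  (forall j, 0 <= q j) -> n%:R * \prod_(j < n) q j <= \sum_(j < n) q j ^+ n.
Proof.
case: n q => [|n] q q0; first by rewrite mul0r big_ord0.
have := leif_AGM_scaled (A := predT) (E := fun j => q j ^+ n.+1).
rewrite cardT size_enum_ord.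
move=> /(_ (fun j _ => mulrn_wge0 _ (exprn_ge0 _ (q0 j)))) [+ _].
rewrite prodrMn_const cardT size_enum_ord prodrXl -mulr_natl natrX -exprMn.
by rewrite ler_pXn2r // nnegrE ?sumr_ge0 ?mulr_ge0 ?prodr_ge0 // => j;
  rewrite exprn_ge0.
Qed.

Section Bidders.
Variables (R : realType) (m : nat) (r : R) (f0 f1 : R -> R).
Hypotheses (m_gt1 : (1 < m)%N) (r_ge0 : 0 <= r).
Hypothesis f0_density : is_value_density f0.
Hypothesis f1_density : is_value_density f1.

Lemma censor_value_le1 (v0 : R) : v0 <= 1 -> censor_value r f1 v0 <= 1.
Proof.
move=> v01; rewrite /censor_value.
have := u0_alone_truthful_le1 r_ge0 v01.
have : 0 <= Ex f1 (fun v1 => u0_both r v0 v0 v1).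
  by apply: Ex_ge0 => // v1 _; case/andP: (u0_both_truthful_in01 v1 r_ge0 v01).
lra.
Qed.

Lemma z0_equilibrium_tip (v0 v1 : R) :
  v0 <= 1 -> z0 m r f1 (t1 v1) (T1 v1) v0 = 0.
Proof.
move=> v01; rewrite /z0 /T1 mulr1 (le_lt_trans (censor_value_le1 v01)) //.
by rewrite (@ltr_nat R 1 m).
Qed.

Section Bidder0.
Variables (v0 t T : R).
Hypotheses (v0_le1 : v0 <= 1) (t_ge0 : 0 <= t) (tT : t <= T).

Local Notation A := (u0_alone r v0 v0).
Local Notation B := (Ex f1 (fun v1 => u0_both r v0 v0 v1)).

(* By [pexcl_payment] and AM-GM, censoring with probability [P] costs bidder 0
   at least [m T P]. *)
Lemma U0_le_censor_bound (b0 : R) (zs : 'I_m -> R) :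
  U0 r f1 t T v0 b0 zs
  <= B + (\prod_(j < m) pexcl m (zs j) t T) * (A - B - m%:R * T).
Proof.
rewrite /U0 /=; set P := \prod_(j < m) _; set Z := \sum_(j < m) _.
have P0 : 0 <= P by apply: prodr_ge0 => j _; exact: pexcl_ge0.
have P1 : P <= 1 by apply: prodr_ile1 => j _; rewrite pexcl_ge0 pexcl_le1.
have alone : P * u0_alone r v0 b0 <= P * A.
  by rewrite ler_wpM2l ?u0_alone_le_truthful.
have both : (1 - P) * Ex f1 (fun v1 => u0_both r v0 b0 v1) <= (1 - P) * B.
  rewrite ler_wpM2l ?subr_ge0 //; apply: le_Ex => // v1 _.
    exact: u0_both_le_truthful.
  exact: u0_both_truthful_in01.
have cost : m%:R * T * P <= Z.
  apply: (@le_trans _ _ (T * \sum_(j < m) pexcl m (zs j) t T ^+ m)).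
    rewrite mulrAC mulrC ler_wpM2l ?(le_trans t_ge0 tT) //.
    by apply: AGM_prod_sum_expn => j; exact: pexcl_ge0.
  by rewrite mulr_sumr; apply: ler_sum => j _; exact: pexcl_payment.
lra.
Qed.

Lemma U0_z0 :
  U0 r f1 t T v0 v0 (fun _ : 'I_m => z0 m r f1 t T v0)
  = B + pexcl m (z0 m r f1 t T v0) t T ^+ m * (A - B - m%:R * T).
Proof.
set z := z0 m r f1 t T v0; set p := pexcl m z t T.
have pay : z * p = T * p ^+ m.
  rewrite /p /z /z0; case: ifP => _; last by rewrite pexcl_ge // expr1n.
  have [T_gt0|T_le0] := ltP 0 T.
    by rewrite pexcl0 // expr0n gtn_eqF ?mulr0 // ltnW.
  have -> : T = 0 by apply/le_anti; rewrite T_le0 (le_trans t_ge0 tT).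
  by rewrite !mul0r.
rewrite /U0 prodr_const sumr_const card_ord -mulr_natr pay.
by rewrite -/p; ring.
Qed.

Lemma bidder0_best_response (b0 : R) (zs : 'I_m -> R) : (forall j, 0 <= zs j) ->
  U0 r f1 t T v0 b0 zs <= U0 r f1 t T v0 v0 (fun _ : 'I_m => z0 m r f1 t T v0).
Proof.
move=> zs0; rewrite U0_z0; apply: le_trans (U0_le_censor_bound b0 zs) _.
rewrite lerD2l /z0 /censor_value; set P := \prod_(j < m) _.
have P0 : 0 <= P by apply: prodr_ge0 => j _; exact: pexcl_ge0.
have P1 : P <= 1 by apply: prodr_ile1 => j _; rewrite pexcl_ge0 pexcl_le1.
case: ifP => [C_lt|/negbT]; last first.
  rewrite -leNgt -subr_ge0 => D_ge0.
  by rewrite pexcl_ge // expr1n mul1r ler_piMl.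
have [T_gt0|T_le0] := ltP 0 T.
  rewrite pexcl0 // expr0n gtn_eqF ?(ltnW m_gt1) // mul0r.
  by rewrite mulr_ge0_le0 // ltW // subr_lt0.
have T0 : T = 0 by apply/le_anti; rewrite T_le0 (le_trans t_ge0 tT).
have t0 : t = 0 by apply/le_anti; rewrite t_ge0 andbT -T0.
have accepted z : 0 <= z -> pexcl m z t T = 1.
  by move=> z_ge0; rewrite pexcl_ge ?t0 ?T0.
by rewrite /P accepted // expr1n big1 // => j _; exact: accepted.
Qed.

End Bidder0.

Lemma U1_truthful (v1 : R) :
  U1 m r f0 f1 v1 v1 (t1 v1) (T1 v1) = Ex f0 (fun v0 => u1_both r v1 v1 v0).
Proof.
apply: eq_Ex => v0 /andP[_ v01]; rewrite z0_equilibrium_tip // /t1 /T1.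
rewrite pexcl0 ?ltr01 // exp_tipE incl_tip0 // expr0n gtn_eqF ?(ltnW m_gt1) //.
by rewrite mulr0n subr0 mul1r !mulr0 subr0.
Qed.

Lemma bidder1_best_response (v1 b t T : R) : v1 <= 1 -> 0 <= t -> t <= T ->
  U1 m r f0 f1 v1 b t T <= U1 m r f0 f1 v1 v1 (t1 v1) (T1 v1).
Proof.
move=> v11 t0 tT; rewrite U1_truthful; apply: le_Ex => // v0 _; last first.
  exact: u1_both_truthful_in01.
rewrite /=; set p := pexcl m _ t T.
have pm0 : 0 <= p ^+ m by rewrite exprn_ge0 ?pexcl_ge0.
have pm1 : p ^+ m <= 1 by rewrite exprn_ile1 ?pexcl_ge0 ?pexcl_le1.
have tip : 0 <= exp_tip m p t T.
  by rewrite exp_tip_ge0 ?pexcl_ge0 ?pexcl_le1 ?(le_trans t0).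
have /andP[u_ge0 _] := u1_both_truthful_in01 v0 r_ge0 v11.
have u_le := u1_both_le_truthful r v1 b v0.
have won : (1 - p ^+ m) * u1_both r v1 b v0 <= u1_both r v1 v1 v0.
  have [u_b_ge0|u_b_lt0] := leP 0 (u1_both r v1 b v0).
    by rewrite (le_trans _ u_le) // ler_piMl // lerBlDr lerDl.
  by rewrite (le_trans _ u_ge0) // mulr_ge0_le0 ?subr_ge0 // ltW.
have : 0 <= m%:R * exp_tip m p t T by rewrite mulr_ge0.
lra.
Qed.

End Bidders.

Theorem proposition8 (R : realType) (m : nat) (r : R) (f0 f1 : R -> R) :
  (2 <= m)%N -> 0 <= r ->
  is_value_density f0 -> is_value_density f1 ->
  profile_is_equilibrium m r f0 f1 /\
  (forall v0 v1 : R, 0 <= v0 <= 1 -> 0 <= v1 <= 1 ->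
     let z := z0 m r f1 (t1 v1) (T1 v1) v0 in
     let p := pexcl m z (t1 v1) (T1 v1) in
     (* no censorship: every proposer includes bidder 1's bid, so the auction
        is the standard second-price auction on both truthful bids *)
     p = 0 /\
     (* expected tip to each proposer is 0, from bidder 1 and from bidder 0 *)
     exp_tip m p (t1 v1) (T1 v1) = 0 /\ z * p = 0).
Proof.
move=> m_gt1 r_ge0 f0_density f1_density; split; first split; [|split|].
- move=> v1 /andP[_ v11] b t T t0 tT.
  exact: bidder1_best_response.
- move=> v0 /andP[_ v01] t T t0 tT b0 zs zs0.
  exact: bidder0_best_response.
- move=> t T z t0 tT z0; rewrite pexcl_ge0 (pexcl_le1 m_gt1); split=> // q q01.
  exact: pexcl_best_response.
- move=> v0 v1 /andP[_ v01] _ z p.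
  have p0 : p = 0 by rewrite /p /z z0_equilibrium_tip // pexcl0 ?ltr01.
  by rewrite p0 exp_tipE incl_tip0 // /t1 !mulr0.
Qed.
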